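(* Let $R$ be a ring with $|R|\geq 2$, regarded also as a semiring. The following are equivalent: (1) $R$ is ideal-simple as a ring (its only ring ideals are $\{0\}$ and $R$); (2) $R$ is ideal-free as a semiring; (3) $R$ is $k$-simple as a semiring; (4) $R$ is congruence-simple as a ring; (5) $R$ is congruence-simple as a semiring; (6) $R$ is $k$-congruence-simple as a semiring.
   Context: A semiring $(R,+,\cdot)$ is a set with two binary operations such that $(R,+)$ is a commutative semigroup, $(R,\cdot)$ is a semigroup, and multiplication distributes over addition from both sides. A zero of $R$ is an element $0$ with $0+r=r$ and $0r=r0=0$ for all $r$. A (semiring) ideal of $R$ is a nonempty subset $A\subseteq R$ with $a+b\in A$ and $ra,ar\in A$ for all $a,b\in A$, $r\in R$; the trivial ideals are $R$ and $\{0\}$ (when a zero exists). $R$ is ideal-free if it has no nontrivial semiring ideals. For an ideal $A$, its $k$-closure is $\overline{A}=\{x\in R\mid x+a=b \text{ for some } a,b\in A\}$, and $A$ is a $k$-ideal if $A=\overline{A}$; $R$ is $k$-simple if it has no nontrivial $k$-ideals. A congruence on $R$ (as semiring) is an equivalence relation $\equiv$ with $a\equiv b$ implying $a+c\equiv b+c$, $ac\equiv bc$, $ca\equiv cb$; $R$ is congruence-simple (as a semiring, resp. as a ring with ring congruences) if it has exactly two congruences, namely $\mathrm{id}_R$ and $R\times R$. For an ideal $A$, $\kappa_A$ is the congruence defined by $x\,\kappa_A\,y$ iff $x+a=y+b$ for some $a,b\in A$; a congruence is a $k$-congruence if it equals $\kappa_A$ for some ideal $A$; $R$ is $k$-congruence-simple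 if it has no $k$-congruences other than $R\times R$ and $\mathrm{id}_R$. *)

From mathcomp Require Import all_boot all_algebra.
Set Implicit Arguments. Unset Strict Implicit. Unset Printing Implicit Defensive.
Import GRing.Theory.
Local Open Scope ring_scope.

(** * Generic semiring notions, for a carrier [T] with addition [add]
      and multiplication [mul] (the semiring axioms are hypotheses of the
      theorem where they are used). *)
Section SemiringNotions.
Variables (T : Type) (add mul : T -> T -> T).

Definition rel_eq (c d : T -> T -> Prop) := forall x y, c x y <-> d x y.
Definition set_eq (A B : T -> Prop) := forall x, A x <-> B x.

Definition is_sr_zero (z : T) :=
  forall r, add z r = r /\ mul z r = z /\ mul r z = z.

Definition sr_ideal (A : T -> Prop) :=
  (exists a, A a) /\
  (forall a b, A a -> A b -> A (add a b)) /\
  (forall r a, A a -> A (mul r a) /\ A (mul a r)).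

Definition sr_trivial (A : T -> Prop) :=
  set_eq A (fun _ => True) \/ (exists z, is_sr_zero z /\ set_eq A (fun x => x = z)).

Definition ideal_free := forall A, sr_ideal A -> sr_trivial A.

Definition kclosure (A : T -> Prop) : T -> Prop :=
  fun x => exists a b, A a /\ A b /\ add x a = b.

Definition k_ideal (A : T -> Prop) := sr_ideal A /\ set_eq A (kclosure A).

Definition k_simple := forall A, k_ideal A -> sr_trivial A.

Definition equivalence_rel (c : T -> T -> Prop) :=
  (forall x, c x x) /\ (forall x y, c x y -> c y x) /\
  (forall x y z, c x y -> c y z -> c x z).

Definition sr_congruence (c : T -> T -> Prop) :=
  equivalence_rel c /\
  forall a b r, c a b ->
    c (add a r) (add b r) /\ c (mul a r) (mul b r) /\ c (mul r a) (mul r b).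

Definition sr_congruence_simple :=
  forall c, sr_congruence c -> rel_eq c eq \/ rel_eq c (fun _ _ => True).

Definition kappa (A : T -> Prop) : T -> T -> Prop :=
  fun x y => exists a b, A a /\ A b /\ add x a = add y b.

Definition k_congruence (c : T -> T -> Prop) :=
  exists A, sr_ideal A /\ rel_eq c (kappa A).

Definition k_congruence_simple :=
  forall c, k_congruence c -> rel_eq c eq \/ rel_eq c (fun _ _ => True).

End SemiringNotions.

(** * Ring notions for a (not necessarily unital) ring given by an additive
      group [V : zmodType] with a multiplication [mul]. *)
Section RingNotions.
Variables (V : zmodType) (mul : V -> V -> V).

Definition ring_ideal (A : V -> Prop) :=
  A 0 /\ (forall a b, A a -> A b -> A (a + b)) /\ (forall a, A a -> A (- a)) /\
  (forall r a, A a -> A (mul r a) /\ A (mul a r)).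

Definition ring_ideal_simple :=
  forall A, ring_ideal A ->
    set_eq A (fun x => x = 0) \/ set_eq A (fun _ => True).

Definition ring_congruence (c : V -> V -> Prop) :=
  equivalence_rel c /\
  forall a b r, c a b ->
    c (a + r) (b + r) /\ c (- a) (- b) /\ c (mul a r) (mul b r) /\ c (mul r a) (mul r b).

Definition ring_congruence_simple :=
  forall c, ring_congruence c -> rel_eq c eq \/ rel_eq c (fun _ _ => True).

End RingNotions.

From mathcomp Require Import all_boot all_algebra.
From mathcomp Require Import zify.
Import GRing.Theory.
Local Open Scope ring_scope.

Set Implicit Arguments. Unset Strict Implicit.

(** In a ring, ring ideals and ring congruences correspond via the class of
    0, semiring congruences are automatically ring congruences (translate by
    -a-b), and every ring ideal is a k-ideal whose [kappa] is the congruence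
    it induces; this makes (1), (3), (4), (5), (6) equivalent.  The content is
    (1) => (2): for a semiring ideal A of an ideal-simple ring, its
    symmetric part {x | x, -x in A} and its k-closure A - A are ring ideals.
    If the first is R, so is A; if the second is 0, so is A.  Otherwise
    A R lies in the symmetric part, which is 0, and A - A = R, so all
    products vanish.  Then every additive subgroup is an ideal, so the
    subgroup generated by 2a is 0 or contains a; either way a has finite
    additive order, -a is a natural multiple of a, and A = 0 as well. *)

Section SemiringCongruence.
Variables (T : Type) (add mul : T -> T -> T).

Lemma sr_congruence_rel_eq c d :
  rel_eq c d -> sr_congruence add mul d -> sr_congruence add mul c.
Proof.
move=> cd [[dR [dS dT]] dC]; split.
  split; first by move=> x; apply/cd.
  split; first by move=> x y /cd/dS/cd.
  by move=> x y z /cd dxy /cd dyz; apply/cd; exact: dT dxy dyz.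
by move=> a b r /cd/(dC _ _ r) [h1 [h2 h3]]; split; [|split]; apply/cd.
Qed.

Hypotheses (addA : associative add) (addC : commutative add).
Hypotheses (mulDl : left_distributive mul add) (mulDr : right_distributive mul add).

Lemma sr_congruence_kappa A :
  sr_ideal add mul A -> sr_congruence add mul (kappa add A).
Proof.
move=> [[a0 Aa0] [AD AM]]; split.
  split; first by move=> x; exists a0, a0.
  split; first by move=> x y [a [b [Aa [Ab e]]]]; exists b, a.
  move=> x y z [a [b [Aa [Ab e]]]] [a' [b' [Aa' [Ab' e']]]].
  exists (add a a'), (add b' b); do 2!(split; first exact: AD).
  by rewrite addA e -addA [add b a']addC addA e' -addA.
move=> x y r [a [b [Aa [Ab e]]]]; split; [|split].
- exists a, b; do 2!split=> //.
  by rewrite -addA [add r a]addC addA e -addA [add b r]addC addA.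
- exists (mul a r), (mul b r); do 2!(split; first exact: (AM r _ _).2).
  by rewrite -!mulDl e.
- exists (mul r a), (mul r b); do 2!(split; first exact: (AM r _ _).1).
  by rewrite -!mulDr e.
Qed.

End SemiringCongruence.

Lemma opp_mulrn_of_mulrz_eq0 (V : zmodType) (a : V) (k : int) :
  k != 0 -> a *~ k = 0 -> exists n, - a = a *+ n.
Proof.
have torsion m : a *+ m.+1 = 0 -> exists n, - a = a *+ n.
  by move=> am0; exists m; apply/eqP; rewrite eq_sym -addr_eq0 -mulrSr am0.
case: k => [[|m]|m] // _; first exact: torsion.
by move/eqP; rewrite oppr_eq0 => /eqP; apply: torsion.
Qed.

Section Ring.
Variables (V : zmodType) (mul : V -> V -> V).

Lemma sr_congruenceE c : sr_congruence +%R mul c <-> ring_congruence mul c.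
Proof.
split=> [[[cR [cS cT]] cC]|[ce cC]]; split=> // a b r cab.
  have [cDr [cMr cMl]] := cC a b r cab; do !split=> //.
  have [+ _] := cC a b (- a - b) cab.
  by rewrite addrA subrr add0r addrC subrK; apply: cS.
by have [? [_ ?]] := cC a b r cab.
Qed.

Lemma ring_congruence_trivial c : ring_congruence mul c ->
  set_eq (c^~ 0) (fun _ => True) \/ set_eq (c^~ 0) (fun x => x = 0) ->
  rel_eq c eq \/ rel_eq c (fun _ _ => True).
Proof.
move=> [[cR _] cC] [c0|c0].
  right=> x y; split=> // _.
  by have [+ _] := cC (x - y) 0 y ((c0 (x - y)).2 I); rewrite subrK add0r.
left=> x y; split=> [cxy|<-] //.
have [+ _] := cC x y (- y) cxy; rewrite subrr => /c0/eqP.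
by rewrite subr_eq0 => /eqP.
Qed.

Lemma ring_idealW A : ring_ideal mul A -> sr_ideal +%R mul A.
Proof. by move=> [A0 [AD [_ AM]]]; split; [exists 0|split]. Qed.

Lemma ring_ideal_kideal A : ring_ideal mul A -> k_ideal +%R mul A.
Proof.
move=> hA; split; first exact: ring_idealW.
have [A0 [AD [AN _]]] := hA.
move=> x; split=> [Ax|[a [b [Aa [Ab e]]]]]; first by exists 0, x; rewrite addr0.
have -> : x = b - a by rewrite -e addrK.
exact: AD Ab (AN a Aa).
Qed.

Lemma kappa0E A x : ring_ideal mul A -> kappa +%R A x 0 <-> A x.
Proof.
move=> [A0 [AD [AN _]]]; split=> [[a [b [Aa [Ab e]]]]|Ax].
  have -> : x = b - a by rewrite -(add0r b) -e addrK.
  exact: AD Ab (AN a Aa).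
by exists 0, x; rewrite addr0 add0r.
Qed.

Hypotheses (mulDl : left_distributive mul +%R) (mulDr : right_distributive mul +%R).

Lemma mul0m x : mul 0 x = 0.
Proof. by apply: (addrI (mul 0 x)); rewrite -mulDl !addr0. Qed.

Lemma mulm0 x : mul x 0 = 0.
Proof. by apply: (addrI (mul x 0)); rewrite -mulDr !addr0. Qed.

Lemma mulNm x y : mul (- x) y = - mul x y.
Proof. by apply: (addrI (mul x y)); rewrite -mulDl !subrr mul0m. Qed.

Lemma mulmN x y : mul x (- y) = - mul x y.
Proof. by apply: (addrI (mul x y)); rewrite -mulDr !subrr mulm0. Qed.

Lemma sr_trivialP A : sr_trivial +%R mul A <->
  set_eq A (fun _ => True) \/ set_eq A (fun x => x = 0).
Proof.
split=> [[AT|[z [z0 Az]]]|[AT|A0]]; [by left| |by left|].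
  by right; have [+ _] := z0 0; rewrite addr0 => <-.
by right; exists 0; split=> // r; rewrite add0r mul0m mulm0.
Qed.

Lemma sr_ideal0 A : sr_ideal +%R mul A -> A 0.
Proof. by move=> [[a Aa] [_ AM]]; rewrite -(mul0m a); exact: (AM 0 a Aa).1. Qed.

Lemma sr_ideal_mulrn A a n : sr_ideal +%R mul A -> A a -> A (a *+ n).
Proof.
move=> hA Aa; elim: n => [|n IH]; first by rewrite mulr0n; exact: sr_ideal0.
by rewrite mulrS; exact: hA.2.1.
Qed.

Lemma ring_ideal_kclosure A :
  sr_ideal +%R mul A -> ring_ideal mul (kclosure +%R A).
Proof.
move=> hA; have [_ [AD AM]] := hA; have A0 := sr_ideal0 hA.
split; first by exists 0, 0; rewrite addr0.
split.
  move=> x y [a [b [Aa [Ab e]]]] [a' [b' [Aa' [Ab' e']]]].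
  exists (a + a'), (b + b'); do 2!(split; first exact: AD).
  by rewrite -e -e' addrACA.
split.
  by move=> x [a [b [Aa [Ab e]]]]; exists b, a; do 2!split=> //; rewrite -e addKr.
move=> r x [a [b [Aa [Ab e]]]]; split.
  exists (mul r a), (mul r b); do 2!(split; first exact: (AM r _ _).1).
  by rewrite -mulDr e.
exists (mul a r), (mul b r); do 2!(split; first exact: (AM r _ _).2).
by rewrite -mulDl e.
Qed.

Definition sympart (A : V -> Prop) x := A x /\ A (- x).

Lemma ring_ideal_sympart A : sr_ideal +%R mul A -> ring_ideal mul (sympart A).
Proof.
move=> hA; have [_ [AD AM]] := hA; have A0 := sr_ideal0 hA.
split; first by rewrite /sympart oppr0.
split.
  by move=> a b [Aa Aa'] [Ab Ab']; rewrite /sympart opprD; split; exact: AD.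
split; first by move=> a [Aa Aa']; rewrite /sympart opprK.
move=> r a [Aa Aa']; rewrite /sympart -mulmN -mulNm.
by split; split; [exact: (AM _ _ Aa).1|exact: (AM _ _ Aa').1|
                  exact: (AM _ _ Aa).2|exact: (AM _ _ Aa').2].
Qed.

Lemma ring_ideal_class0 c : ring_congruence mul c -> ring_ideal mul (c^~ 0).
Proof.
move=> [[cR [_ cT]] cC]; split=> //; split.
  by move=> a b ca cb; have [+ _] := cC _ _ b ca; rewrite add0r => /cT; apply.
split; first by move=> a ca; have [_ [+ _]] := cC _ _ 0 ca; rewrite oppr0.
by move=> r a ca; have [_ [_ []]] := cC _ _ r ca; rewrite mul0m mulm0.
Qed.

Lemma opp_mulrn_of_zero_mul :
  ring_ideal_simple mul -> (forall x y, mul x y = 0) ->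
  forall a : V, exists n, - a = a *+ n.
Proof.
move=> simple mul0 a.
pose B x := exists z : int, x = a *~ (2 * z).
have hB : ring_ideal mul B.
  split; first by exists 0; rewrite mulr0.
  split.
    by move=> _ _ [z ->] [z' ->]; exists (z + z'); rewrite mulrDr mulrzDr.
  split; first by move=> _ [z ->]; exists (- z); rewrite mulrN mulrNz.
  by move=> r x _; rewrite !mul0; split; exists 0; rewrite mulr0.
have [B0|BT] := simple B hB.
  by apply: (@opp_mulrn_of_mulrz_eq0 _ _ 2) => //; apply/B0; exists 1.
have [z az] := (BT a).2 I.
apply: (@opp_mulrn_of_mulrz_eq0 _ _ (2 * z - 1)); first by apply/eqP; lia.
by rewrite mulrzBr -az mulr1z subrr.
Qed.

Lemma ideal_free_of_ring_ideal_simple :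
  ring_ideal_simple mul -> ideal_free +%R mul.
Proof.
move=> simple A hA; have [_ [_ AM]] := hA; have A0 := sr_ideal0 hA.
have [S0|ST] := simple _ (ring_ideal_sympart hA); last first.
  by apply/sr_trivialP; left=> x; split=> // _; exact: ((ST x).2 I).1.
have [K0|KT] := simple _ (ring_ideal_kclosure hA).
  apply/sr_trivialP; right=> x; split=> [Ax|->] //.
  by apply/K0; exists 0, x; rewrite addr0.
have mulA0 a v : A a -> mul a v = 0.
  move=> Aa; apply/S0; split; first exact: (AM v a Aa).2.
  by rewrite -mulmN; exact: (AM _ a Aa).2.
have mul0 x y : mul x y = 0.
  have [a [b [Aa [Ab e]]]] := (KT x).2 I.
  have -> : x = b - a by rewrite -e addrK.
  by rewrite mulDl mulNm !mulA0 ?subrr.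
have Aopp a : A a -> A (- a).
  by have [n ->] := opp_mulrn_of_zero_mul simple mul0 a; exact: sr_ideal_mulrn.
apply/sr_trivialP; right=> x; split=> [Ax|->] //.
by apply/S0; split=> //; exact: Aopp.
Qed.

End Ring.

Theorem corollary4p5 (V : zmodType) (mul : V -> V -> V)
  (mulA : forall x y z, mul x (mul y z) = mul (mul x y) z)
  (mulDl : forall x y z, mul (x + y) z = mul x z + mul y z)
  (mulDr : forall x y z, mul x (y + z) = mul x y + mul x z)
  (card2 : exists x y : V, x <> y) :
  [<-> ring_ideal_simple mul;
       ideal_free +%R mul;
       k_simple +%R mul;
       ring_congruence_simple mul;
       sr_congruence_simple +%R mul;
       k_congruence_simple +%R mul].
Proof.
tfae.
- exact: ideal_free_of_ring_ideal_simple mulDl mulDr.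
- by move=> free A [hA _]; exact: free.
- move=> ksimple c hc; apply: ring_congruence_trivial (hc) _.
  apply/(sr_trivialP mulDl mulDr)/ksimple/ring_ideal_kideal.
  exact: (ring_ideal_class0 mulDl mulDr hc).
- by move=> simple c /sr_congruenceE; exact: simple.
- move=> simple c [A [hA cA]]; apply: simple.
  apply: (sr_congruence_rel_eq cA).
  exact: (sr_congruence_kappa (@addrA V) (@addrC V) mulDl mulDr hA).
- move=> ksimple A hA.
  have hk : k_congruence +%R mul (kappa +%R A).
    by exists A; split=> //; exact: ring_idealW.
  have [h|h] := ksimple _ hk; [left|right] => x; split=> [Ax|x0] //.
  + by apply/(h x 0)/(kappa0E x hA).
  + by rewrite x0; exact: hA.1.
  + by apply/(kappa0E x hA)/(h x 0).
Qed.
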